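(* For $z\in\mathbb{C}$ with $\Re z>-1$, the functions $$u_z(y):=\frac{e^{-zy}-1-z(e^{-y}-1)}{e^{y}-1},\qquad v_z(y):=ze^{-y}-u_z(y)=\frac{1-e^{-zy}}{e^{y}-1}$$ (extended by continuity at $y=0$) are bounded and continuous on $[0,\infty)$. Furthermore, there exist constants $C_{\Re z},C_{1,\Re z},C_{2,\Re z},\epsilon_{1,\Re z},\epsilon_{2,\Re z}>0$, depending only on $\Re z$, such that for all $y\ge0$ and all $x\ge C_{\Re z}$, $$|v_z(y)|\le C_{1,\Re z}\,|z|\,e^{-\epsilon_{1,\Re z}y}\qquad\text{and}\qquad |v_z(x)|\le C_{2,\Re z}\,e^{-\epsilon_{2,\Re z}x}.$$ *)

From Stdlib Require Import Reals.
From Coquelicot Require Export Coquelicot.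
Open Scope R_scope.

Definition Cexp (w : C) : C :=
  (exp (Re w) * cos (Im w), exp (Re w) * sin (Im w)).

Definition u_fun (z : C) (y : R) : C :=
  if Req_EM_T y 0 then RtoC 0
  else ((Cexp (- (z * RtoC y)) - RtoC 1 - z * (RtoC (exp (- y)) - RtoC 1))
        / RtoC (exp y - 1))%C.

Definition v_fun (z : C) (y : R) : C :=
  if Req_EM_T y 0 then z
  else ((RtoC 1 - Cexp (- (z * RtoC y))) / RtoC (exp y - 1))%C.

Definition continuous_on_nonneg (f : R -> C) : Prop :=
  forall x : R, 0 <= x ->
    filterlim f (within (fun t : R => 0 <= t) (locally x)) (locally (f x)).

Definition bounded_on_nonneg (f : R -> C) : Prop :=
  exists M : R, forall y : R, 0 <= y -> Cmod (f y) <= M.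

From Stdlib Require Import Reals Lra.
From Coquelicot Require Import Coquelicot.
Open Scope R_scope.

(* Write z = p + i q and d = min (1 + p, 1), so that 0 < d <= 1 and |e^{-z y}| <= e^{(1-d) y}.
   The numerator 1 - e^{-z y} of v_z is at most 3 |z| y e^{(1-d) y} in modulus, by
   |1 - e^x| <= |x| e^{max (x, 0)} and |1 - cos t|, |sin t| <= |t| applied to its real and
   imaginary parts, and trivially at most 2 e^{(1-d) y}.  On the other side
   e^y - 1 >= (d/2) y e^{(1 - d/2) y}, and e^y - 1 >= e^y / 2 once y >= 1; dividing gives the
   two decay estimates, with rates d/2 and d.  Each component of v_z is F(y)/(e^y - 1) for a
   smooth F vanishing at 0, i.e. a ratio of two difference quotients at 0 extended by the
   derivatives, hence continuous; u_z = z e^{-y} - v_z inherits continuity and boundedness. *)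

Lemma exp_le_compat x y : x <= y -> exp x <= exp y.
Proof.
  intros [Hlt | ->]; [now left; apply exp_increasing | apply Rle_refl].
Qed.

Lemma Rabs_sin_le x : Rabs (sin x) <= Rabs x.
Proof.
  assert (pos : forall t, 0 < t -> Rabs (sin t) <= t).
  { intros t Ht. pose proof (sin_lt_x t Ht). pose proof (SIN_bound t).
    destruct (Rle_lt_dec t 1).
    - assert (0 <= sin t) by (apply sin_ge_0; pose proof PI2_1; lra).
      rewrite Rabs_right; lra.
    - apply Rabs_le; lra. }
  destruct (Rtotal_order x 0) as [Hx | [-> | Hx]].
  - rewrite <- Rabs_Ropp, <- sin_neg, (Rabs_left x) by lra. apply pos; lra.
  - rewrite sin_0; lra.
  - rewrite (Rabs_right x) by lra. now apply pos.
Qed.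

Lemma Rabs_one_sub_cos_le x : Rabs (1 - cos x) <= Rabs x.
Proof.
  replace x with (2 * (x / 2)) at 1 by field.
  rewrite cos_2a_sin.
  replace (1 - (1 - 2 * sin (x / 2) * sin (x / 2))) with (2 * (sin (x / 2) * sin (x / 2))) by ring.
  rewrite Rabs_mult, Rabs_mult, (Rabs_right 2) by lra.
  pose proof (Rabs_sin_le (x / 2)) as Hs.
  assert (Rabs (sin (x / 2)) <= 1) by (apply Rabs_le, SIN_bound).
  replace (Rabs (x / 2)) with (Rabs x / 2) in Hs
    by (unfold Rdiv; rewrite Rabs_mult, Rabs_inv, (Rabs_right 2) by lra; reflexivity).
  pose proof (Rabs_pos (sin (x / 2))). nra.
Qed.

Lemma Rabs_one_sub_exp_le x : Rabs (1 - exp x) <= Rabs x * exp (Rmax x 0).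
Proof.
  pose proof (exp_ineq1_le x).
  destruct (Rle_dec x 0) as [Hx | Hx].
  - pose proof (exp_le_compat x 0 Hx). rewrite exp_0 in *.
    rewrite Rmax_right, exp_0, Rmult_1_r, (Rabs_left1 x), Rabs_pos_eq; lra.
  - rewrite Rmax_left, (Rabs_right x), (Rabs_left1 (1 - exp x)) by lra.
    assert (exp (- x) * exp x = 1) by (rewrite <- exp_plus, Rplus_opp_l; apply exp_0).
    pose proof (exp_ineq1_le (- x)); pose proof (exp_pos x); nra.
Qed.

Lemma exp_sub_one_ge t y : 0 <= t <= 1 -> 0 <= y -> t * y * exp (y - t * y) <= exp y - 1.
Proof.
  intros Ht Hy.
  pose proof (exp_ineq1_le (t * y)).
  assert (1 <= exp (y - t * y)) by (rewrite <- exp_0; apply exp_le_compat; nra).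
  assert (E : exp (t * y) * exp (y - t * y) = exp y)
    by (rewrite <- exp_plus; f_equal; ring).
  nra.
Qed.

Lemma exp_sub_one_pos y : 0 < y -> 0 < exp y - 1.
Proof. intros Hy; pose proof (exp_ineq1_le y); lra. Qed.

Lemma exp_sub_one_neq_0 y : y <> 0 -> exp y - 1 <> 0.
Proof.
  intros Hy H; apply Hy, exp_inv; rewrite exp_0; lra.
Qed.

Lemma Cmod_le_Rabs_Re_Im (w : C) : Cmod w <= Rabs (Re w) + Rabs (Im w).
Proof.
  destruct w as [x y]; unfold Cmod; cbn [Re Im fst snd].
  pose proof (Rabs_pos x); pose proof (Rabs_pos y).
  rewrite <- (sqrt_pow2 (Rabs x + Rabs y)) by lra.
  apply sqrt_le_1_alt.
  rewrite <- (pow2_abs x), <- (pow2_abs y). nra.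
Qed.

Lemma Im_le_Cmod (w : C) : Rabs (Im w) <= Cmod w.
Proof.
  eapply Rle_trans; [apply Rmax_r | apply (Rmax_Cmod w)].
Qed.

Lemma Cmod_Cexp w : Cmod (Cexp w) = exp (Re w).
Proof.
  destruct w as [a b]; unfold Cexp, Cmod; cbn [Re Im fst snd].
  pose proof (sin2_cos2 b) as E; unfold Rsqr in E.
  replace (_ ^ 2 + _ ^ 2) with (exp a ^ 2)
    by (transitivity (exp a ^ 2 * (sin b * sin b + cos b * cos b)); [rewrite E|]; ring).
  apply sqrt_pow2, Rlt_le, exp_pos.
Qed.

Lemma Cdiv_RtoC (w : C) r : r <> 0 -> (w / RtoC r)%C = (Re w / r, Im w / r).
Proof.
  intros Hr; destruct w; unfold Cdiv, Cmult, Cinv, RtoC; simpl; f_equal; field; auto.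
Qed.

Lemma Cmult_RtoC_r (w : C) r : (w * RtoC r)%C = (Re w * r, Im w * r).
Proof. destruct w; unfold Cmult, RtoC; simpl; f_equal; ring. Qed.

Lemma RtoC_neq_0 r : r <> 0 -> RtoC r <> 0%C.
Proof. intros Hr H; apply Hr; exact (f_equal fst H). Qed.

Definition v_num (z : C) (y : R) : C := (1 - Cexp (- (z * RtoC y)))%C.

Lemma v_num_eq z y :
  v_num z y = (1 - exp (- (Re z * y)) * cos (Im z * y), exp (- (Re z * y)) * sin (Im z * y)).
Proof.
  destruct z as [p q]; unfold v_num, Cexp, Cminus, Cplus, Copp, Cmult, RtoC; simpl.
  replace (- (p * y - q * 0)) with (- (p * y)) by ring.
  replace (- (p * 0 + q * y)) with (- (q * y)) by ring.
  rewrite cos_neg, sin_neg; f_equal; ring.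
Qed.

Section v_num_bounds.

Variables (z : C) (k y : R).
Hypotheses (Re_z_ge : - Re z <= k) (k_ge0 : 0 <= k) (y_ge0 : 0 <= y).

Lemma Cmod_v_num_le_linear : Cmod (v_num z y) <= 3 * Cmod z * y * exp (k * y).
Proof.
  rewrite v_num_eq; eapply Rle_trans; [apply Cmod_le_Rabs_Re_Im|]; simpl.
  set (t := Im z * y); set (e := exp (- (Re z * y))); set (E := exp (k * y)).
  assert (e_pos : 0 < e) by apply exp_pos.
  assert (e_le : e <= E) by (apply exp_le_compat; nra).
  assert (Cmod_y_ge0 : 0 <= Cmod z * y) by (pose proof (Cmod_ge_0 z); nra).
  assert (exp_bound : Rabs (1 - e) <= Cmod z * y * E).
  { eapply Rle_trans; [apply Rabs_one_sub_exp_le|].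
    rewrite Rabs_Ropp, Rabs_mult, (Rabs_right y) by lra.
    apply Rmult_le_compat; [apply Rmult_le_pos; [apply Rabs_pos | lra] | left; apply exp_pos | |].
    - pose proof (re_le_Cmod z); nra.
    - apply exp_le_compat, Rmax_lub; nra. }
  assert (t_le : Rabs t <= Cmod z * y).
  { unfold t; rewrite Rabs_mult, (Rabs_right y) by lra.
    pose proof (Im_le_Cmod z); nra. }
  assert (cos_bound : e * Rabs (1 - cos t) <= E * (Cmod z * y)).
  { apply Rmult_le_compat; [lra | apply Rabs_pos | lra |].
    eapply Rle_trans; [apply Rabs_one_sub_cos_le | exact t_le]. }
  assert (sin_bound : e * Rabs (sin t) <= E * (Cmod z * y)).
  { apply Rmult_le_compat; [lra | apply Rabs_pos | lra |].
    eapply Rle_trans; [apply Rabs_sin_le | exact t_le]. }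
  replace (1 - e * cos t) with ((1 - e) + e * (1 - cos t)) by ring.
  pose proof (Rabs_triang (1 - e) (e * (1 - cos t))).
  rewrite !Rabs_mult, (Rabs_right e) in * by lra.
  lra.
Qed.

Lemma Cmod_v_num_le_exp : Cmod (v_num z y) <= 2 * exp (k * y).
Proof.
  unfold v_num, Cminus; eapply Rle_trans; [apply Cmod_triangle|].
  rewrite Cmod_opp, Cmod_Cexp, Cmod_1.
  replace (Re (- (z * RtoC y))) with (- (Re z * y)) by (destruct z; simpl; ring).
  assert (1 <= exp (k * y)) by (rewrite <- exp_0; apply exp_le_compat; nra).
  assert (exp (- (Re z * y)) <= exp (k * y)) by (apply exp_le_compat; nra).
  lra.
Qed.

End v_num_bounds.

Lemma v_fun_eq_div z y : y <> 0 -> v_fun z y = (v_num z y / RtoC (exp y - 1))%C.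
Proof. intros Hy; unfold v_fun; destruct Req_EM_T; [contradiction | reflexivity]. Qed.


Lemma Cmod_v_fun_pos z y : 0 < y -> Cmod (v_fun z y) = Cmod (v_num z y) / (exp y - 1).
Proof.
  intros Hy; pose proof (exp_sub_one_pos y Hy).
  rewrite v_fun_eq_div, Cmod_div, Cmod_R, Rabs_right by (try apply RtoC_neq_0; lra).
  reflexivity.
Qed.

Section v_fun_bounds.

Variables (z : C) (d : R).
Hypotheses (d_pos : 0 < d) (d_le1 : d <= 1) (d_le : d <= 1 + Re z).

Lemma Cmod_v_fun_le y : 0 <= y -> Cmod (v_fun z y) <= 6 / d * Cmod z * exp (- (d / 2) * y).
Proof.
  intros [Hy | <-].
  - rewrite Cmod_v_fun_pos, Rle_div_l by (try apply Rlt_gt, exp_sub_one_pos; lra).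
    eapply Rle_trans; [apply (Cmod_v_num_le_linear z (1 - d)); lra|].
    assert (Hsplit : exp ((1 - d) * y) = exp (- (d / 2) * y) * exp (y - d / 2 * y))
      by (rewrite <- exp_plus; f_equal; field).
    rewrite Hsplit.
    replace (3 * Cmod z * y * (exp (- (d / 2) * y) * exp (y - d / 2 * y)))
      with (6 / d * Cmod z * exp (- (d / 2) * y) * (d / 2 * y * exp (y - d / 2 * y)))
      by (field; lra).
    apply Rmult_le_compat_l; [|apply exp_sub_one_ge; lra].
    pose proof (Cmod_ge_0 z); pose proof (exp_pos (- (d / 2) * y)).
    apply Rmult_le_pos; [apply Rmult_le_pos|]; [apply Rle_div_r|..]; lra.
  - unfold v_fun; destruct Req_EM_T; [|congruence].
    rewrite Rmult_0_r, exp_0, Rmult_1_r.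
    assert (1 <= 6 / d) by (apply Rle_div_r; lra).
    pose proof (Cmod_ge_0 z); nra.
Qed.

Lemma Cmod_v_fun_le_large x : 1 <= x -> Cmod (v_fun z x) <= 4 * exp (- d * x).
Proof.
  intros Hx.
  rewrite Cmod_v_fun_pos, Rle_div_l by (try apply Rlt_gt, exp_sub_one_pos; lra).
  eapply Rle_trans; [apply (Cmod_v_num_le_exp z (1 - d)); lra|].
  assert (Hsplit : exp ((1 - d) * x) = exp (- d * x) * exp x)
    by (rewrite <- exp_plus; f_equal; ring).
  rewrite Hsplit.
  pose proof (exp_ineq1_le x); pose proof (exp_pos (- d * x)); nra.
Qed.

Lemma Cmod_v_fun_le_uniform y : 0 <= y -> Cmod (v_fun z y) <= 6 / d * Cmod z.
Proof.
  intros Hy; eapply Rle_trans; [now apply Cmod_v_fun_le|].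
  rewrite <- (Rmult_1_r (6 / d * Cmod z)) at 2.
  apply Rmult_le_compat_l.
  - pose proof (Cmod_ge_0 z); apply Rmult_le_pos; [apply Rle_div_r|]; lra.
  - rewrite <- exp_0; apply exp_le_compat; nra.
Qed.

End v_fun_bounds.

Definition diff_quot (F : R -> R) (l y : R) : R := if Req_EM_T y 0 then l else F y / y.

Lemma continuous_diff_quot (F : R -> R) (l x : R) :
  F 0 = 0 -> is_derive F 0 l -> (forall y, continuous F y) -> continuous (diff_quot F l) x.
Proof.
  intros F0 dF cF.
  destruct (Req_dec x 0) as [-> | Hx].
  - apply continuity_pt_filterlim; apply is_derive_Reals in dF.
    intros eps Heps; destruct (dF eps Heps) as [delta Hdelta].
    exists delta; split; [apply cond_pos|].
    intros y [[_ Hy0] Hy]; simpl in Hy; unfold R_dist in *; rewrite Rminus_0_r in Hy.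
    specialize (Hdelta y (not_eq_sym Hy0) Hy).
    rewrite Rplus_0_l, F0, Rminus_0_r in Hdelta.
    unfold diff_quot; destruct (Req_EM_T y 0); [congruence|].
    destruct (Req_EM_T 0 0); [exact Hdelta | congruence].
  - apply continuous_ext_loc with (fun y => F y * / y).
    + apply filter_imp with (fun y => y <> 0); [|now apply open_neq].
      intros y Hy; unfold diff_quot; destruct Req_EM_T; [contradiction | reflexivity].
    + apply (continuous_mult (K := R_AbsRing)); [apply cF|].
      apply continuous_Rinv_comp; [apply continuous_id | exact Hx].
Qed.

Lemma continuous_div_exp_sub_one (F : R -> R) (l x : R) :
  F 0 = 0 -> is_derive F 0 l -> (forall y, continuous F y) ->
  continuous (fun y => if Req_EM_T y 0 then l else F y / (exp y - 1)) x.
Proof.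
  intros F0 dF cF.
  apply continuous_ext with (fun y => diff_quot F l y / diff_quot (fun t => exp t - 1) 1 y).
  { intros y; simpl; unfold diff_quot; destruct Req_EM_T as [_ | Hy]; [field|].
    pose proof (exp_sub_one_neq_0 y Hy); field; auto. }
  assert (dexp : forall y, diff_quot (fun t => exp t - 1) 1 y <> 0).
  { intros y; unfold diff_quot; destruct Req_EM_T as [_ | Hy]; [lra|].
    apply Rmult_integral_contrapositive; split; [apply exp_sub_one_neq_0, Hy | apply Rinv_neq_0_compat, Hy]. }
  apply continuity_pt_filterlim, continuity_pt_div; [| |apply dexp];
    apply continuity_pt_filterlim, continuous_diff_quot; auto.
  - rewrite exp_0; ring.
  - auto_derive; [auto | rewrite exp_0; ring].
  - intros y; apply (ex_derive_continuous (V := R_NormedModule)); auto_derive; auto.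
Qed.

Lemma continuous_pair (f g : R -> R) (x : R) :
  continuous f x -> continuous g x -> continuous (fun y => (f y, g y) : C) x.
Proof.
  intros cf cg.
  apply (continuous_comp_2 f g pair); auto.
  apply continuous_ext with (fun p => p); [now intros [] | apply continuous_id].
Qed.

Lemma v_fun_eq_pair z y : v_fun z y =
  (if Req_EM_T y 0 then Re z else (1 - exp (- (Re z * y)) * cos (Im z * y)) / (exp y - 1),
   if Req_EM_T y 0 then Im z else exp (- (Re z * y)) * sin (Im z * y) / (exp y - 1)).
Proof.
  unfold v_fun; destruct Req_EM_T as [_ | Hy]; [now destruct z|].
  fold (v_num z y); rewrite v_num_eq, Cdiv_RtoC by (now apply exp_sub_one_neq_0).
  reflexivity.
Qed.

Lemma continuous_v_fun z x : continuous (v_fun z) x.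
Proof.
  eapply continuous_ext; [intros y; symmetry; apply v_fun_eq_pair|].
  apply continuous_pair; apply continuous_div_exp_sub_one.
  all: try (intros y; apply (ex_derive_continuous (V := R_NormedModule)); auto_derive; auto).
  all: try (auto_derive; [auto|]).
  all: rewrite ?Rmult_0_r, ?Ropp_0, ?exp_0, ?cos_0, ?sin_0; ring.
Qed.

Lemma u_fun_eq z y : u_fun z y = (z * RtoC (exp (- y)) - v_fun z y)%C.
Proof.
  unfold u_fun, v_fun; destruct Req_EM_T as [-> | Hy].
  - rewrite Ropp_0, exp_0; ring.
  - pose proof (exp_sub_one_neq_0 y Hy).
    assert (exp y <> 0) by apply exp_neq_0.
    rewrite exp_Ropp, RtoC_inv, !RtoC_minus by auto.
    field; split; [rewrite <- RtoC_minus|]; apply RtoC_neq_0; auto.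
Qed.

Lemma continuous_u_fun z x : continuous (u_fun z) x.
Proof.
  apply continuous_ext with (fun y => (z * RtoC (exp (- y)) - v_fun z y)%C);
    [intros; symmetry; apply u_fun_eq|].
  apply (continuous_minus (V := C_NormedModule)); [|apply continuous_v_fun].
  eapply continuous_ext; [intros y; symmetry; apply Cmult_RtoC_r |].
  apply continuous_pair; apply (ex_derive_continuous (V := R_NormedModule)); auto_derive; auto.
Qed.

Lemma Cmod_u_fun_le z y : 0 <= y -> Cmod (u_fun z y) <= Cmod z + Cmod (v_fun z y).
Proof.
  intros Hy; rewrite u_fun_eq; unfold Cminus.
  eapply Rle_trans; [apply Cmod_triangle|].
  rewrite Cmod_opp, Cmod_mult, Cmod_R, Rabs_right by (left; apply exp_pos).
  assert (exp (- y) <= 1) by (rewrite <- exp_0; apply exp_le_compat; lra).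
  pose proof (Cmod_ge_0 z); nra.
Qed.

Lemma continuous_on_nonneg_of_continuous (f : R -> C) :
  (forall x, continuous f x) -> continuous_on_nonneg f.
Proof.
  intros cf x _; eapply filterlim_filter_le_1; [apply filter_le_within | apply cf].
Qed.

Theorem lemma5p2 :
  forall a : R, -1 < a ->
  exists C0 C1 C2 eps1 eps2 : R,
    0 < C0 /\ 0 < C1 /\ 0 < C2 /\ 0 < eps1 /\ 0 < eps2 /\
    forall z : C, Re z = a ->
      bounded_on_nonneg (u_fun z) /\ continuous_on_nonneg (u_fun z) /\
      bounded_on_nonneg (v_fun z) /\ continuous_on_nonneg (v_fun z) /\
      (forall y : R, 0 <= y -> Cmod (v_fun z y) <= C1 * Cmod z * exp (- eps1 * y)) /\
      (forall x : R, C0 <= x -> Cmod (v_fun z x) <= C2 * exp (- eps2 * x)).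
Proof.
  intros a Ha.
  set (d := Rmin (1 + a) 1).
  assert (d_pos : 0 < d) by (apply Rmin_glb_lt; lra).
  assert (d_le1 : d <= 1) by apply Rmin_r.
  exists 1, (6 / d), 4, (d / 2), d.
  assert (0 < 6 / d) by (apply Rdiv_lt_0_compat; lra).
  do 5 (split; [lra|]).
  intros z Hz.
  assert (d_le : d <= 1 + Re z) by (rewrite Hz; apply Rmin_l).
  repeat split.
  - exists (Cmod z + 6 / d * Cmod z); intros y Hy.
    eapply Rle_trans; [now apply Cmod_u_fun_le|].
    now apply Rplus_le_compat_l, Cmod_v_fun_le_uniform.
  - apply continuous_on_nonneg_of_continuous, continuous_u_fun.
  - exists (6 / d * Cmod z); intros y Hy; now apply Cmod_v_fun_le_uniform.
  - apply continuous_on_nonneg_of_continuous, continuous_v_fun.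
  - intros y Hy; now apply Cmod_v_fun_le.
  - intros x Hx; now apply Cmod_v_fun_le_large.
Qed.
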